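(* Let $(X,\mathcal{A},\mu)$ be a probability space, $\theta$ a measure-preserving endomorphism, $\varphi$ a ceiling function, and $(\overline{X},\overline{\mu},(\Phi_t))$ the associated special flow. Let $\overline{A}\subset\overline{X}$ be a hole such that for some $\lambda>0$ the limit \[\alpha:=\lim_{n\to\infty}-\frac{1}{n\lambda}\log\overline{\mu}\big(\{(x,s)\in\overline{X}:\forall\tau\in[0,n\lambda]:\Phi_\tau(x,s)\notin\overline{A}\}\big)\] exists. Then for every sequence $(t_k)_{k\in\mathbb{N}}$ of positive reals with $t_k\to\infty$ the limit \[\lim_{k\to\infty}-\frac{1}{t_k}\log\overline{\mu}\big(\{(x,s)\in\overline{X}:\forall\tau\in[0,t_k]:\Phi_\tau(x,s)\notin\overline{A}\}\big)\] exists and equals $\alpha$. In particular the escape rate $\rho(\overline{A},\varphi)$ exists and equals $\alpha$.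
   Context: A ceiling function is a measurable $\varphi:X\to\mathbb{R}$ with $\inf\varphi>0$. $S_n\varphi=\sum_{k=0}^{n-1}\varphi\circ\theta^k$, $N_t^\varphi(x)=\min\{n\in\mathbb{N}_0:S_n\varphi(x)>t\}$. Special flow: $\overline{X}=\{(x,s):0\le s<\varphi(x)\}$ with $\overline{\mu}$ the restriction of $\mu\otimes$Lebesgue; $\Phi_t(x,s)=(x,s+t)$ if $t<\varphi(x)-s$ and $\Phi_t(x,s)=(\theta^{N-1}x,s+t-S_{N-1}\varphi(x))$ with $N=N^\varphi_{s+t}(x)$ otherwise. A hole is a measurable $\overline{A}\subset\overline{X}$ with $\bigcup_{t\ge0}\Phi_t^{-1}(\overline{A})=\overline{X}$ a.e. and $\bigcup_{t\in[0,\tau]}\Phi_t^{-1}(\overline{A})$ measurable for all $\tau\ge0$. The escape rate $\rho(\overline{A},\varphi)$ is $\lim_{t\to\infty}-\frac1t\log\overline{\mu}(\{(x,s):\forall\tau\in[0,t]:\Phi_\tau(x,s)\notin\overline{A}\})$ when this limit exists (i.e. limsup and liminf coincide). *)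

From HB Require Import structures.
From mathcomp Require Import all_boot all_order all_algebra.
From mathcomp Require Import all_classical all_reals all_analysis.
Set Implicit Arguments. Unset Strict Implicit. Unset Printing Implicit Defensive.
Import Order.TTheory GRing.Theory Num.Theory.
Local Open Scope classical_set_scope.
Local Open Scope ring_scope.

Section SpecialFlow.
Context {d : measure_display} {X : measurableType d} {R : realType}.

Definition Ssum (theta : X -> X) (phi : X -> R) (n : nat) (x : X) : R :=
  \sum_(k < n) phi (iter k theta x).

(* N_t^phi(x) = min {n : S_n phi x > t} (default 0 if the set is empty,
   which never happens for a ceiling function) *)
Definition Nphi (theta : X -> X) (phi : X -> R) (t : R) (x : X) : nat :=
  xget 0%N [set n | t < Ssum theta phi n x /\
                    forall m, t < Ssum theta phi m x -> (n <= m)%N].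

Definition ceiling (phi : X -> R) : Prop :=
  measurable_fun setT phi /\ exists c : R, 0 < c /\ forall x, c <= phi x.

Definition measure_preserving (mu : set X -> \bar R) (theta : X -> X) : Prop :=
  measurable_fun setT theta /\
  forall A, measurable A -> mu (theta @^-1` A) = mu A.

Definition Xbar (phi : X -> R) : set (X * R) :=
  [set p | 0 <= p.2 /\ p.2 < phi p.1].

Definition mubar (mu : set X -> \bar R) (phi : X -> R) (E : set (X * R)) : \bar R :=
  (mu \x (@lebesgue_measure R))%E (E `&` Xbar phi).

Definition Phi (theta : X -> X) (phi : X -> R) (t : R) (p : X * R) : X * R :=
  let: (x, s) := p in
  if t < phi x - s then (x, s + t)
  else let N := Nphi theta phi (s + t) x in
       (iter N.-1 theta x, s + t - Ssum theta phi N.-1 x).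

Definition hit (theta : X -> X) (phi : X -> R) (A : set (X * R)) (I : set R) :=
  \bigcup_(t in I) (Xbar phi `&` (Phi theta phi t @^-1` A)).

Definition hole (mu : set X -> \bar R) (theta : X -> X) (phi : X -> R)
  (A : set (X * R)) : Prop :=
  [/\ measurable A, A `<=` Xbar phi,
      mubar mu phi (Xbar phi `\` hit theta phi A `[0, +oo[) = 0%E &
      forall tau, 0 <= tau -> measurable (hit theta phi A `[0, tau])].

Definition survivor (theta : X -> X) (phi : X -> R) (A : set (X * R)) (t : R) :=
  [set p | Xbar phi p /\ forall tau, 0 <= tau <= t -> ~ A (Phi theta phi tau p)].

(* - (1/t) log mubar(survivor t), in the extended reals (log 0 = -oo) *)
Definition esc (mu : set X -> \bar R) (theta : X -> X) (phi : X -> R)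
  (A : set (X * R)) (t : R) : \bar R :=
  ((- t^-1)%:E * lne (mubar mu phi (survivor theta phi A t)))%E.

End SpecialFlow.

(* Survivor sets shrink as t grows, so t |-> -log mubar(survivor t) is
   nondecreasing.  For n lambda <= t < (n + 1) lambda this squeezes the rate at
   t between the rates at n lambda and (n + 1) lambda, multiplied by
   n lambda / t and (n + 1) lambda / t respectively; both factors tend to 1. *)
From HB Require Import structures.
From mathcomp Require Import all_boot all_order all_algebra.
From mathcomp Require Import all_classical all_reals all_analysis.
Set Implicit Arguments. Unset Strict Implicit. Unset Printing Implicit Defensive.
Import Order.TTheory GRing.Theory Num.Theory.
Local Open Scope classical_set_scope.
Local Open Scope ring_scope.

Section DecayRate.
Context {R : realType}.

Definition decay_rate (L : R -> \bar R) (t : R) : \bar R := ((- t^-1)%:E * L t)%E.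

Lemma decay_rate_rescale (L : R -> \bar R) (s t : R) : 0 < s -> 0 < t ->
  (decay_rate L s * (s / t)%:E)%E = ((- t^-1)%:E * L s)%E.
Proof.
by move=> s0 t0; rewrite /decay_rate muleAC -EFinM mulNr mulKf ?gt_eqF.
Qed.

Lemma lee_wnmul2l (c : R) (a b : \bar R) : 0 <= c -> (b <= a)%E ->
  ((- c)%:E * a <= (- c)%:E * b)%E.
Proof.
by move=> c0 ba; rewrite EFinN !mulNe leeN2 lee_wpmul2l ?lee_fin.
Qed.

Lemma trunc_div_bounds (lam t : R) : 0 < lam -> 0 <= t ->
  (Num.truncn (t / lam))%:R * lam <= t < (Num.truncn (t / lam)).+1%:R * lam.
Proof.
move=> lam0 t0; have /andP[lo hi] := truncn_itv (divr_ge0 t0 (ltW lam0)).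
by rewrite -ler_pdivlMr // -ltr_pdivrMr // lo hi.
Qed.

Lemma trunc_div_gt0 (lam t : R) : 0 < lam -> lam <= t ->
  (0 < Num.truncn (t / lam))%N.
Proof.
move=> lam0 lam_t; have t0 : 0 <= t := le_trans (ltW lam0) lam_t.
have /andP[_ hi] := trunc_div_bounds lam0 t0.
by rewrite -ltnS -(ltr_nat R) -(ltr_pM2r lam0) mul1r (le_lt_trans lam_t hi).
Qed.

Section AlongFilter.
Context {T : Type} (F : set_system T) {FF : ProperFilter F}.

Lemma cvgn_trunc_div (lam : R) (u : T -> R) : 0 < lam ->
  u @ F --> +oo -> (fun x => Num.truncn (u x / lam)) @ F --> \oo.
Proof.
move=> lam0 /cvgryPge u_ge; apply/cvgnyPge => m.
near=> x; have u0 : 0 <= u x by near: x; exact: u_ge.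
have /andP[_ hi] := trunc_div_bounds lam0 u0.
have : m%:R * lam < (Num.truncn (u x / lam)).+1%:R * lam.
  by apply: le_lt_trans hi; near: x; exact: u_ge.
by rewrite ltr_pM2r // ltr_nat ltnS.
Unshelve. all: end_near. Qed.

Lemma cvge_ratio_one (u v : T -> R) (c : R) : u @ F --> +oo ->
  (\forall x \near F, `|u x - v x| <= c) ->
  (fun x => (v x / u x)%:E) @ F --> 1%:E.
Proof.
move=> u_oo uv_c; apply/fine_cvgP; split; first exact: nearW.
apply/cvgrPdist_le => e e0.
near=> x; have u0 : 0 < u x by near: x; exact: (cvgryPgt u).1.
have -> : 1 - v x / u x = (u x - v x) / u x by rewrite mulrBl divff ?gt_eqF.
rewrite normrM normfV (gtr0_norm u0) ler_pdivrMr //.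
apply: (le_trans (_ : _ <= c)); first by near: x.
by rewrite -ler_pdivrMl // mulrC; near: x; exact: (cvgryPge u).1.
Unshelve. all: end_near. Qed.

Lemma cvge_mulr_one (f g : T -> \bar R) (a : \bar R) :
  f @ F --> a -> g @ F --> 1%:E -> (fun x => f x * g x)%E @ F --> a.
Proof.
move=> fa g1; rewrite -[a]mule1; apply: cvgeM fa g1.
by case: a => [r||]; rewrite /mule_def ?oner_neq0.
Qed.

Lemma decay_rate_cvg (L : R -> \bar R) (lam : R) (alpha : \bar R) (u : T -> R) :
  0 < lam -> (forall s t, 0 <= s -> s <= t -> (L t <= L s)%E) ->
  (fun n : nat => decay_rate L (n%:R * lam)) @ \oo --> alpha ->
  u @ F --> +oo -> (fun x => decay_rate L (u x)) @ F --> alpha.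
Proof.
move=> lam0 L_anti rate_alpha u_oo.
pose n x := Num.truncn (u x / lam).
have n_oo : n @ F --> \oo := cvgn_trunc_div lam0 u_oo.
have nS_oo : (fun x => (n x).+1) @ F --> \oo.
  by apply/cvgnyPge => m; apply: filterS ((cvgnyPge n).1 n_oo m) => x /leqW.
have n_bounds : \forall x \near F,
    [/\ (0 < n x)%N, (n x)%:R * lam <= u x & u x < (n x).+1%:R * lam].
  apply: filterS ((cvgryPge u).1 u_oo lam) => x lam_u.
  have /andP[lo hi] := trunc_div_bounds lam0 (le_trans (ltW lam0) lam_u).
  by split=> //; exact: trunc_div_gt0.
have lower : (fun x => decay_rate L ((n x)%:R * lam) *
    ((n x)%:R * lam / u x)%:E)%E @ F --> alpha.
  apply: cvge_mulr_one; first exact: cvg_comp n_oo rate_alpha.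
  apply: (cvge_ratio_one (c := lam)) => //; apply: filterS n_bounds.
  move=> x [_ lo hi]; rewrite ger0_norm ?subr_ge0 // lerBlDl ltW //.
  by rewrite -[X in _ + X]mul1r -mulrDl natr1.
have upper : (fun x => decay_rate L ((n x).+1%:R * lam) *
    ((n x).+1%:R * lam / u x)%:E)%E @ F --> alpha.
  apply: cvge_mulr_one; first exact: cvg_comp nS_oo rate_alpha.
  apply: (cvge_ratio_one (c := lam)) => //; apply: filterS n_bounds.
  move=> x [_ lo hi]; rewrite distrC ger0_norm; last by rewrite subr_ge0 ltW.
  by rewrite lerBlDr -natr1 mulrDl mul1r addrC lerD2l.
apply: squeeze_cvge lower upper; apply: filterS n_bounds => x [n_gt0 lo hi].
have nlam_gt0 : 0 < (n x)%:R * lam by rewrite mulr_gt0 // ltr0n.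
have u_gt0 : 0 < u x := lt_le_trans nlam_gt0 lo.
have uinv_ge0 : 0 <= (u x)^-1 by rewrite invr_ge0 ltW.
rewrite !decay_rate_rescale ?(lt_trans u_gt0 hi) //.
rewrite !lee_wnmul2l // L_anti // ?ltW // (le_trans (ltW nlam_gt0) lo).
Qed.

End AlongFilter.
End DecayRate.

Section Survivors.
Context {d : measure_display} {X : measurableType d} {R : realType}.
Variables (mu : {measure set X -> \bar R}) (theta : X -> X) (phi : X -> R).
Variable A : set (X * R).

Lemma measurable_Xbar : measurable_fun setT phi -> measurable (Xbar phi).
Proof.
move=> mphi.
have m_ge0 : measurable_fun setT (fun p : X * R => 0 <= p.2).
  apply: (@measurable_realfun.measurable_fun_ler _ _ _ _ (fun=> 0) snd).
    exact: measurable_cst.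
  exact: measurable_snd.
have m_lt : measurable_fun setT (fun p : X * R => p.2 < phi p.1).
  apply: measurable_realfun.measurable_fun_ltr measurable_snd _.
  exact: measurableT_comp mphi measurable_fst.
have := measurableI _ _ (m_ge0 measurableT [set true] I)
  (m_lt measurableT [set true] I).
by rewrite !setTI.
Qed.

Lemma survivorIXbar (t : R) :
  survivor theta phi A t `&` Xbar phi = Xbar phi `\` hit theta phi A `[0, t].
Proof.
apply/seteqP; split=> p /=.
  move=> [[Xp surv] _]; split=> //; case=> tau /=; rewrite in_itv /= => tau_t [_].
  exact: surv.
move=> [Xp nohit]; split=> //; split=> // tau tau_t A_tau; apply: nohit.
by exists tau => //=; rewrite in_itv.
Qed.

Lemma le_mubar_survivor (s t : R) : measurable_fun setT phi ->
  (forall tau, 0 <= tau -> measurable (hit theta phi A `[0, tau])) ->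
  0 <= s -> s <= t ->
  (mubar mu phi (survivor theta phi A t) <= mubar mu phi (survivor theta phi A s))%E.
Proof.
move=> mphi mhit s0 st; rewrite /mubar !survivorIXbar.
have mXbar := measurable_Xbar mphi.
apply: le_measure; rewrite ?inE.
- exact: measurableD mXbar (mhit _ (le_trans s0 st)).
- exact: measurableD mXbar (mhit _ s0).
apply: setDS => p [tau /=]; rewrite in_itv /= => /andP[tau0 tau_s] hit_tau.
by exists tau => //=; rewrite in_itv /= tau0 (le_trans tau_s st).
Qed.

End Survivors.

Theorem lemma3p8 (d : measure_display) (X : measurableType d) (R : realType)
  (mu : probability X R) (theta : X -> X) (phi : X -> R)
  (A : set (X * R)) (lambda : R) (alpha : \bar R) :
  measure_preserving mu theta ->
  ceiling phi ->
  hole mu theta phi A ->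
  0 < lambda ->
  (fun n : nat => esc mu theta phi A (n%:R * lambda)) @ \oo --> alpha ->
  (forall tk : nat -> R, (forall k, 0 < tk k) -> tk @ \oo --> +oo ->
     (fun k => esc mu theta phi A (tk k)) @ \oo --> alpha) /\
  (esc mu theta phi A t @[t --> +oo] --> alpha).
Proof.
move=> _ [mphi _] [_ _ _ mhit] lambda0 esc_alpha.
pose L t := lne (mubar mu phi (survivor theta phi A t)).
have L_anti s t : 0 <= s -> s <= t -> (L t <= L s)%E.
  move=> s0 st; rewrite lee_lne ?in_itv /= ?measure_ge0 ?leey //.
  exact: le_mubar_survivor.
split=> [tk _ tk_oo|]; first exact: decay_rate_cvg lambda0 L_anti esc_alpha tk_oo.
exact: decay_rate_cvg lambda0 L_anti esc_alpha cvg_id.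
Qed.
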